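(* Let $t\in T_2$, let $\mathcal{T}_t$ be the variety defined by $t(x,y)=x$, let $X$ be a set, and let $A=X\mathcal{T}_t^{\,p}$ be the free $\mathcal{T}_t^{\,p}$-algebra over $X$ with semilattice replica congruence $\varrho$. Let $\theta$ be any congruence of $A$ and $\psi=\theta\vee\varrho$. Then $A/\theta$ is a semilattice sum of $\mathcal{T}_t$-algebras. More precisely, $\psi/\theta$ is the semilattice replica congruence of $A/\theta$, and every $\psi/\theta$-class $(a/\theta)/(\psi/\theta)$, $a\in A$, satisfies $t(x,y)=x$.
   Context: Standing conventions: $\Omega$-algebras are of a plural similarity type (no nullary operation symbols, at least one operation symbol of arity $\ge2$). $T_n$ is the set of $\Omega$-terms in $x_1,\dots,x_n$ in which all $n$ variables occur. An identity is regular if the same variables occur on both sides. $\mathcal{S}$ is the variety of $\Omega$-algebras satisfying all regular identities. A semilattice sum of $\mathcal{V}$-algebras is an $\Omega$-algebra $A$ with a congruence $\theta$ such that $A/\theta\in\mathcal{S}$ and each $\theta$-class (a subalgebra) is in $\mathcal{V}$. The semilattice replica congruence of $A$ is the smallest congruence $\varrho$ with $A/\varrho\in\mathcal{S}$. Prolongation: for an identity $\sigma$ of the form $u(y_1,\dots,y_n)=v(y_1,\dots,y_n)$ and $m\ge1$, $\sigma^p_m$ is the set of identities $u(r_1,\dots,r_n)=v(r_1,\dots,r_n)$ obtained by substituting $r_i(x_1,\dots,x_m)$ for $y_i$, with $r_i$ ranging over $T_m$; $\sigma^p=\bigcup_m\sigma^p_m$; $\Sigma^p=\bigcup_{\sigma\in\Sigma}\sigma^p$.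 For a variety $\mathcal{V}$, $\mathcal{V}^p$ is the variety defined by $\mathrm{Id}(\mathcal{V})^p$. *)

From Stdlib Require Import ClassicalEpsilon.
From mathcomp Require Import all_boot.

Set Implicit Arguments.
Unset Strict Implicit.
Unset Printing Implicit Defensive.

Record signature := Signature { op : Type; ar : op -> nat }.

Definition plural (S : signature) : Prop :=
  (forall o : op S, 0 < ar o) /\ (exists o : op S, 1 < ar o).

Inductive term (S : signature) (V : Type) : Type :=
  | Var : V -> term S V
  | App : forall o : op S, ('I_(ar o) -> term S V) -> term S V.
Arguments Var {S V} _.
Arguments App {S V} o _.

Fixpoint occurs (S : signature) (V : Type) (x : V) (u : term S V) : Prop :=
  match u with
  | Var y => x = y
  | App o f => exists i, occurs x (f i)
  end.

Fixpoint subst (S : signature) (V W : Type) (s : V -> term S W) (u : term S V)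
  : term S W :=
  match u with
  | Var x => s x
  | App o f => App o (fun i => subst s (f i))
  end.

(* T_n : terms in x_1,...,x_n (encoded as variables 0,...,n-1) in which
   all n variables occur *)
Definition inT (S : signature) (n : nat) (r : term S nat) : Prop :=
  forall x, occurs x r <-> x < n.

Definition identity (S : signature) := (term S nat * term S nat)%type.

Definition regular (S : signature) (s : identity S) : Prop :=
  forall x, occurs x s.1 <-> occurs x s.2.

Record algebra (S : signature) := Algebra {
  carrier :> Type;
  ops : forall o : op S, ('I_(ar o) -> carrier) -> carrier }.
Arguments ops {S} a o _.

Fixpoint eval (S : signature) (A : algebra S) (V : Type) (e : V -> A)
  (u : term S V) : A :=
  match u with
  | Var x => e x
  | App o f => ops A o (fun i => eval e (f i))
  end.

Definition satisfies (S : signature) (A : algebra S) (s : identity S) : Prop :=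
  forall e : nat -> A, eval e s.1 = eval e s.2.

Definition Mod (S : signature) (Sigma : identity S -> Prop) (A : algebra S)
  : Prop := forall s, Sigma s -> satisfies A s.

Definition Id (S : signature) (K : algebra S -> Prop) (s : identity S) : Prop :=
  forall B : algebra S, K B -> satisfies B s.

Definition in_S (S : signature) (A : algebra S) : Prop :=
  Mod (@regular S) A.

Definition prolongation (S : signature) (Sigma : identity S -> Prop)
  (s : identity S) : Prop :=
  exists sg : identity S, Sigma sg /\
  exists m : nat, 0 < m /\
  exists r : nat -> term S nat,
    (forall i, occurs i sg.1 \/ occurs i sg.2 -> inT m (r i)) /\
    s = (subst r sg.1, subst r sg.2).

Definition prolonged_variety (S : signature) (K : algebra S -> Prop)
  : algebra S -> Prop := Mod (prolongation (Id K)).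

Definition Tt_identity (S : signature) (t : term S nat) : identity S :=
  (t, Var 0).
Definition Tt_ids (S : signature) (t : term S nat) (s : identity S) : Prop :=
  s = Tt_identity t.
Definition Tt (S : signature) (t : term S nat) : algebra S -> Prop :=
  Mod (Tt_ids t).

Definition hom (S : signature) (A B : algebra S) (h : A -> B) : Prop :=
  forall o (f : 'I_(ar o) -> A), h (ops A o f) = ops B o (fun i => h (f i)).

Definition is_free (S : signature) (K : algebra S -> Prop) (X : Type)
  (A : algebra S) (iota : X -> A) : Prop :=
  K A /\
  (forall a : A, exists u : term S X, eval iota u = a) /\
  (forall B : algebra S, K B -> forall f : X -> B,
     exists h : A -> B, hom h /\ forall x, h (iota x) = f x).

Definition congruence (S : signature) (A : algebra S) (r : A -> A -> Prop)
  : Prop :=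
  (forall a, r a a) /\ (forall a b, r a b -> r b a) /\
  (forall a b c, r a b -> r b c -> r a c) /\
  (forall o (f g : 'I_(ar o) -> A),
     (forall i, r (f i) (g i)) -> r (ops A o f) (ops A o g)).

Definition cjoin (S : signature) (A : algebra S) (r1 r2 : A -> A -> Prop)
  (a b : A) : Prop :=
  forall c, congruence c -> (forall x y, r1 x y -> c x y) ->
            (forall x y, r2 x y -> c x y) -> c a b.

Section Quotient.
Variables (S : signature) (A : algebra S) (r : A -> A -> Prop).

Definition qcarrier := {P : A -> Prop | exists a, P = r a}.

Definition cls (a : A) : qcarrier := exist _ (r a) (ex_intro _ a erefl).

Definition rep (q : qcarrier) : A :=
  proj1_sig (constructive_indefinite_description _ (proj2_sig q)).

Definition qops (o : op S) (F : 'I_(ar o) -> qcarrier) : qcarrier :=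
  cls (ops A o (fun i => rep (F i))).

Definition quotient : algebra S := Algebra qops.
End Quotient.

(* for congruences theta <= psi of A, the congruence psi/theta of A/theta *)
Definition quot_rel (S : signature) (A : algebra S) (theta psi : A -> A -> Prop)
  (p q : quotient theta) : Prop :=
  exists a b, p = cls theta a /\ q = cls theta b /\ psi a b.

Definition is_sl_replica (S : signature) (A : algebra S) (r : A -> A -> Prop)
  : Prop :=
  congruence r /\ in_S (quotient r) /\
  (forall c, congruence c -> in_S (quotient c) -> forall a b, r a b -> c a b).

Definition class_subalgebra (S : signature) (A : algebra S)
  (r : A -> A -> Prop) (b : A) : Prop :=
  forall o (f : 'I_(ar o) -> A), (forall i, r b (f i)) -> r b (ops A o f).

Definition class_satisfies (S : signature) (A : algebra S)
  (r : A -> A -> Prop) (b : A) (s : identity S) : Prop :=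
  forall e : nat -> A, (forall i, r b (e i)) -> eval e s.1 = eval e s.2.

Definition sl_sum (S : signature) (Sigma : identity S -> Prop) (A : algebra S)
  : Prop :=
  exists c : A -> A -> Prop, congruence c /\ in_S (quotient c) /\
  forall b : A, class_subalgebra c b /\
                (forall s, Sigma s -> class_satisfies c b s).

Arguments quot_rel {S A} theta psi p q.
Arguments cls {S A} r a.

From Stdlib Require Import List ClassicalEpsilon FunctionalExtensionality PropExtensionality ProofIrrelevance.
From mathcomp Require Import all_boot zify.

(* A generator x of the free algebra is sent to {x} in a powerset semilattice, which
   lies in S and hence in T_t^p; so rho-related elements are words with the same
   variables, and for such words the prolonged identity t(u, w) = u gives
   t(a, b) = a.  The relation "theta(t(a, b), a) and theta(t(b, a), b)" therefore
   contains theta and rho, and it is transitive by the absorption identity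
   t(t(x, t(y, z)), t(z, t(y, x))) = t(x, t(y, z)) of T_t^p; so it contains
   psi = theta \/ rho, which is t(x, y) = x on the classes of psi/theta.  That
   psi/theta is the semilattice replica of A/theta holds for any algebra: a
   congruence of A/theta with quotient in S pulls back to one of A containing
   theta and rho. *)

Set Implicit Arguments.
Unset Strict Implicit.

Section Terms.
Variable S : signature.

Lemma term_has_var (hS : plural S) V (u : term S V) : exists x, occurs x u.
Proof.
elim: u => [x|o f IH]; first by exists x.
have [x hx] := IH (Ordinal (proj1 hS o)); by exists x, (Ordinal (proj1 hS o)).
Qed.

Lemma occurs_subst V W (s : V -> term S W) u x :
  occurs x (subst s u) <-> exists2 y, occurs y u & occurs x (s y).
Proof.
elim: u => [y|o f IH] /=; first by split=> [|[y' -> //]]; exists y.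
split=> [[i /IH [y hy hx]]|[y [i hy] hx]]; first by exists y => //; exists i.
by exists i; apply/IH; exists y.
Qed.

Lemma eval_subst (A : algebra S) V W (s : V -> term S W) (e : W -> A) u :
  eval e (subst s u) = eval (fun x => eval e (s x)) u.
Proof.
elim: u => [y|o f IH] //=; congr (ops A o); exact: functional_extensionality.
Qed.

Lemma eval_ext (A : algebra S) V (e e' : V -> A) u :
  (forall x, occurs x u -> e x = e' x) -> eval e u = eval e' u.
Proof.
elim: u => [y|o f IH] /= he; first exact: he.
congr (ops A o); apply: functional_extensionality => i.
by apply: IH => x hx; apply: he; exists i.
Qed.

Lemma eval_congr (A : algebra S) (r : A -> A -> Prop) V (e e' : V -> A) u :
  congruence r -> (forall x, r (e x) (e' x)) -> r (eval e u) (eval e' u).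
Proof. by move=> [_ [_ [_ rc]]] he; elim: u => [y|o f IH] //=; apply: rc. Qed.

Lemma hom_eval (A B : algebra S) (h : A -> B) V (e : V -> A) u :
  hom h -> h (eval e u) = eval (fun x => h (e x)) u.
Proof.
move=> hh; elim: u => [y|o f IH] //=.
by rewrite hh; congr (ops B o); apply: functional_extensionality.
Qed.

End Terms.

Section Quotients.
Variables (S : signature) (A : algebra S) (r : A -> A -> Prop).
Hypothesis hr : congruence r.

Lemma cls_eq a b : cls r a = cls r b <-> r a b.
Proof.
have [rr [rs [rt _]]] := hr; split=> [/(f_equal (@proj1_sig _ _)) /= E|rab].
  by rewrite E; apply: rr.
apply: eq_exist_uncurried; exists (functional_extensionality _ _ (fun x =>
  propositional_extensionality _ _ (conj (rt _ _ _ (rs _ _ rab)) (rt _ _ _ rab)))).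
exact: proof_irrelevance.
Qed.

Lemma cls_rep (q : quotient r) : cls r (rep q) = q.
Proof.
case: q => P hP; rewrite /rep /=; case: constructive_indefinite_description => a E.
by subst P; congr exist; exact: proof_irrelevance.
Qed.

Lemma cls_ops o (f : 'I_(ar o) -> A) :
  cls r (ops A o f) = ops (quotient r) o (fun i => cls r (f i)).
Proof.
apply/cls_eq; have [_ [rs [_ rc]]] := hr; apply: rc => i; apply: rs.
by apply/cls_eq; rewrite cls_rep.
Qed.

Lemma eval_cls V (e : V -> A) u :
  eval (A := quotient r) (fun x => cls r (e x)) u = cls r (eval e u).
Proof.
elim: u => [y|o f IH] //; rewrite [RHS]/= cls_ops /=.
by congr qops; apply: functional_extensionality.
Qed.

Lemma eval_quotient V (e : V -> quotient r) u :
  eval e u = cls r (eval (fun x => rep (e x)) u).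
Proof. by rewrite -eval_cls; apply: eval_ext => x _; rewrite cls_rep. Qed.

Lemma in_S_quotientP : in_S (quotient r) <->
  (forall s, regular s -> forall e : nat -> A, r (eval e s.1) (eval e s.2)).
Proof.
split=> [hq s hs e|hq s hs e].
  by apply/cls_eq; rewrite -!eval_cls; apply: hq.
by rewrite !eval_quotient; apply/cls_eq; apply: hq.
Qed.

End Quotients.

Section Kernels.
Variables (S : signature) (A B : algebra S) (h : A -> B).
Hypothesis hh : hom h.

Lemma kernel_congruence : congruence (fun a b => h a = h b).
Proof.
do ![split] => // [a b c -> -> //|o f g hfg].
by rewrite !hh; congr (ops B o); apply: functional_extensionality.
Qed.

Lemma in_S_quotient_kernel : in_S B -> in_S (quotient (fun a b => h a = h b)).
Proof.
move=> hB; apply/(in_S_quotientP kernel_congruence) => s hs e.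
by rewrite !(hom_eval _ _ hh); apply: hB.
Qed.

End Kernels.

Definition powerset_alg (S : signature) (X : Type) : algebra S :=
  @Algebra S (X -> Prop) (fun o f x => exists i, f i x).

Section RegularIdentities.
Variable S : signature.

Lemma eval_powerset X V (e : V -> X -> Prop) (u : term S V) x :
  (eval (A := powerset_alg S X) e u : X -> Prop) x <-> exists2 v, occurs v u & e v x.
Proof.
elim: u => [y|o f IH] /=; first by split=> [|[v -> //]]; exists y.
split=> [[i /IH [v hv hx]]|[v [i hv] hx]]; first by exists v => //; exists i.
by exists i; apply/IH; exists v.
Qed.

Lemma in_S_powerset X : in_S (powerset_alg S X).
Proof.
move=> s hs e; apply: functional_extensionality => x.
apply: propositional_extensionality; rewrite !eval_powerset.
by split=> -[v /hs hv hx]; exists v.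
Qed.

Lemma occurs_subst_inT (hS : plural S) m (r : nat -> term S nat) u x :
  (forall i, occurs i u -> inT m (r i)) -> occurs x (subst r u) <-> x < m.
Proof.
move=> hr; rewrite occurs_subst; split=> [[y hy /(hr y hy)] //|xm].
by have [y hy] := term_has_var hS u; exists y => //; apply/(hr y hy).
Qed.

Lemma regular_prolongation (hS : plural S) Sigma (s : identity S) :
  prolongation Sigma s -> regular s.
Proof.
move=> [sg [_ [m [_ [r [hr ->]]]]]] x /=.
by rewrite !(occurs_subst_inT (m := m) hS) => // i hi; apply: hr; [right|left].
Qed.

Lemma in_S_prolonged (hS : plural S) Sigma (B : algebra S) :
  in_S B -> Mod (prolongation Sigma) B.
Proof. by move=> hB s /(regular_prolongation hS); apply: hB. Qed.

Lemma class_subalgebra_in_S (hS : plural S) (A : algebra S) (c : A -> A -> Prop) b :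
  congruence c -> in_S (quotient c) -> class_subalgebra c b.
Proof.
move=> hc /(in_S_quotientP hc) hcS o f hf; have [_ [cs [ct cc]]] := hc.
have idem : @regular S (App o (fun _ => @Var S nat 0), Var 0).
  by move=> x /=; split=> [[] //|<-]; exists (Ordinal (proj1 hS o)).
apply: ct (cs _ _ (hcS _ idem (fun _ => b))) _.
exact: cc.
Qed.

End RegularIdentities.

Section Compatibility.
Variables (S : signature) (A : algebra S) (R : A -> A -> Prop).

Definition compatible_at_one_place : Prop :=
  forall o (f g : 'I_(ar o) -> A) j,
    (forall i, i != j -> f i = g i) -> R (f j) (g j) -> R (ops A o f) (ops A o g).

Lemma congruence_at_one_place : congruence R -> compatible_at_one_place.
Proof.
move=> [Rr [_ [_ Rc]]] o f g j hfg hj; apply: Rc => i.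
by case: (eqVneq i j) => [->|/hfg ->].
Qed.

Lemma compatible_of_one_place :
  (forall a, R a a) -> (forall a b c, R a b -> R b c -> R a c) ->
  compatible_at_one_place ->
  forall o (f g : 'I_(ar o) -> A),
    (forall i, R (f i) (g i)) -> R (ops A o f) (ops A o g).
Proof.
move=> Rr Rt R1 o f g hfg.
pose h k (i : 'I_(ar o)) := if i < k then g i else f i.
have -> : g = h (ar o) by apply: functional_extensionality => i; rewrite /h ltn_ord.
elim: (ar o) => [|k IH].
  by have -> : h 0 = f by apply: functional_extensionality.
apply: Rt IH _; case: (ltnP k (ar o)) => [klt|kge].
  apply: (R1 _ _ _ (Ordinal klt)) => [i ik|]; last by rewrite /h /= ltnn ltnSn.
  by rewrite /h ltnS [i <= k]leq_eqVlt (negbTE (ik : (i : nat) != k)).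
have -> : h k.+1 = h k; last exact: Rr.
apply: functional_extensionality => i; rewrite /h ltnS [i <= k]leq_eqVlt.
by case: eqP => [ik|//]; have := ltn_ord i; rewrite ik ltnNge kge.
Qed.

End Compatibility.

Section Join.
Variables (S : signature) (A : algebra S) (r1 r2 : A -> A -> Prop).

Inductive join_chain : A -> A -> Prop :=
  | chain_l a b : r1 a b -> join_chain a b
  | chain_r a b : r2 a b -> join_chain a b
  | chain_trans a b c : join_chain a b -> join_chain b c -> join_chain a c.

Lemma cjoin_congruence : congruence (cjoin r1 r2).
Proof.
split; [|split; [|split]] => [a c hc _ _|a b hab c hc h1 h2|a b d hab hbd c hc h1 h2|
  o f g hfg c hc h1 h2]; have [cr [cs [ct cc]]] := hc.
- exact: cr.
- by apply: cs; apply: hab.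
- exact: ct (hab _ hc h1 h2) (hbd _ hc h1 h2).
- by apply: cc => i; apply: hfg.
Qed.

Lemma cjoin_l a b : r1 a b -> cjoin r1 r2 a b.
Proof. by move=> hab c _ h1 _; apply: h1. Qed.

Lemma cjoin_r a b : r2 a b -> cjoin r1 r2 a b.
Proof. by move=> hab c _ _ h2; apply: h2. Qed.

Hypotheses (hr1 : congruence r1) (hr2 : congruence r2).

Lemma join_chain_at_one_place : compatible_at_one_place join_chain.
Proof.
move=> o f g j hfg; move hx: (f j) => x; move hy: (g j) => y hxy.
elim: hxy f g hfg hx hy => [a b hab|a b hab|a c b _ IH1 _ IH2] f g hfg ha hb.
- by apply/chain_l/(congruence_at_one_place hr1 hfg); rewrite ha hb.
- by apply/chain_r/(congruence_at_one_place hr2 hfg); rewrite ha hb.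
pose fz i := if i == j then c else f i.
apply: (chain_trans (b := ops A o fz)).
  by apply: IH1 => [i /negbTE ij|//|]; rewrite /fz ?ij ?eqxx.
by apply: IH2 => [i /[dup] /negbTE ij /hfg <-|//|]; rewrite /fz ?ij ?eqxx.
Qed.

Lemma join_chain_congruence : congruence join_chain.
Proof.
have [r1r _] := hr1.
have chain_refl a : join_chain a a by apply/chain_l/r1r.
have chain_sym a b : join_chain a b -> join_chain b a.
  elim=> [{}a {}b /(proj1 (proj2 hr1))|{}a {}b /(proj1 (proj2 hr2))|a' b' c' _ IH1 _ IH2].
  - exact: chain_l.
  - exact: chain_r.
  - exact: chain_trans IH2 IH1.
do ![split] => //; first exact: chain_trans.
exact: compatible_of_one_place chain_refl chain_trans join_chain_at_one_place.
Qed.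

Lemma cjoin_chain a b : cjoin r1 r2 a b -> join_chain a b.
Proof. by apply; [exact: join_chain_congruence|exact: chain_l|exact: chain_r]. Qed.

End Join.

Section QuotientRelation.
Variables (S : signature) (A : algebra S) (theta psi : A -> A -> Prop).
Hypotheses (htheta : congruence theta) (hpsi : congruence psi)
  (theta_psi : forall a b, theta a b -> psi a b).

Lemma quot_rel_cls a b : quot_rel theta psi (cls theta a) (cls theta b) <-> psi a b.
Proof.
have [_ [ps [pt _]]] := hpsi; split=> [[a' [b' [/cls_eq ha [/cls_eq hb hab]]]]|hab].
  exact: pt (theta_psi (ha htheta)) (pt _ _ _ hab (ps _ _ (theta_psi (hb htheta)))).
by exists a, b.
Qed.

Lemma quot_rel_rep p q : quot_rel theta psi p q <-> psi (rep p) (rep q).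
Proof. by rewrite -quot_rel_cls !cls_rep. Qed.

Lemma quot_rel_congruence : congruence (quot_rel theta psi).
Proof.
have [pr [ps [pt pc]]] := hpsi.
split; [|split; [|split]] => [p|p q|p q r|o f g hfg]; rewrite ?quot_rel_rep //.
- exact: ps.
- exact: pt.
rewrite /= /qops -quot_rel_cls !cls_rep quot_rel_cls.
by apply: pc => i; apply/quot_rel_rep.
Qed.

End QuotientRelation.

Lemma quot_rel_join_replica (S : signature) (A : algebra S) (theta rho : A -> A -> Prop) :
  congruence theta -> is_sl_replica rho ->
  is_sl_replica (quot_rel theta (cjoin theta rho)).
Proof.
move=> htheta [hrho [rhoS rho_min]].
have hpsi := cjoin_congruence theta rho.
have theta_psi := @cjoin_l _ _ theta rho.
have hq := quot_rel_congruence htheta hpsi theta_psi.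
split; [exact: hq|split].
  apply/(in_S_quotientP hq) => s hs e; rewrite !(eval_quotient htheta).
  apply/(quot_rel_cls htheta hpsi theta_psi); apply: cjoin_r.
  exact: (proj1 (in_S_quotientP hrho) rhoS s hs).
move=> c hc cS p q /(quot_rel_rep htheta hpsi theta_psi) hpq.
pose ct a b := c (cls theta a) (cls theta b).
have hct : congruence ct.
  have [cr [cs [ctr cc]]] := hc.
  split; [|split; [|split]] => [a|a b|a b d|o f g hfg]; rewrite /ct.
  - exact: cr.
  - exact: cs.
  - exact: ctr.
  - by rewrite !(cls_ops htheta); apply: cc.
have ctS : in_S (quotient ct).
  apply/(in_S_quotientP hct) => s hs e; rewrite /ct -!(eval_cls htheta).
  exact: (proj1 (in_S_quotientP hc) cS).
rewrite -(cls_rep p) -(cls_rep q); apply: (hpq ct hct) => a b hab; last exact: rho_min.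
by rewrite /ct (proj2 (cls_eq htheta a b) hab); apply: (proj1 hc).
Qed.

Lemma In_enum_ord n (i : 'I_n) : List.In i (enum 'I_n).
Proof.
have : i \in enum 'I_n by rewrite mem_enum.
elim: (enum 'I_n) => //= j s IH; rewrite in_cons => /orP [/eqP ->|/IH]; auto.
Qed.

Fixpoint term_vars (S : signature) (V : Type) (u : term S V) : list V :=
  match u with
  | Var x => x :: nil
  | App o f => List.concat (List.map (fun i => term_vars (f i)) (enum 'I_(ar o)))
  end.

Lemma In_term_vars (S : signature) V (u : term S V) x :
  List.In x (term_vars u) <-> occurs x u.
Proof.
elim: u => [y|o f IH] /=; first by split=> [[-> //|[]]|->]; left.
rewrite in_concat; split=> [[l [/in_map_iff [i [<- _]] /IH]]|[i /IH hx]]; first by exists i.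
by exists (term_vars (f i)); split=> //; apply/in_map_iff; exists i; split=> //; apply: In_enum_ord.
Qed.

Lemma list_enumeration (V : Type) (d : V) (L : list V) :
  exists m (idx : V -> nat) (sel : nat -> V),
    (forall x, List.In x L -> sel (idx x) = x) /\
    (forall i, (exists2 x, List.In x L & idx x = i) <-> i < m).
Proof.
elim: L => [|a L [m [idx [sel [hsel hidx]]]]].
  by exists 0, (fun _ => 0), (fun _ => d); split=> // i; split=> [[]|].
have [aL|aL] := classic (List.In a L).
  exists m, idx, sel; split=> [x [<-|/hsel //]|i]; first exact: hsel.
  rewrite -hidx; split=> [[x [<-|xL] <-]|[x xL <-]]; first by exists a.
    by exists x.
  by exists x => //; right.
pose idx' x := if excluded_middle_informative (x = a) then m else idx x.
have idx'_a : idx' a = m by rewrite /idx'; case: excluded_middle_informative.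
have idx'_L x : List.In x L -> idx' x = idx x.
  by rewrite /idx'; case: excluded_middle_informative => // xa; subst x.
have idxL x : List.In x L -> idx x < m by move=> xL; apply/hidx; exists x.
exists m.+1, idx', (fun i => if i == m then a else sel i); split.
  move=> x [<-|xL]; first by rewrite idx'_a eqxx.
  by rewrite idx'_L // (ltn_eqF (idxL x xL)) hsel.
move=> i; split=> [[x [<-|xL] <-]|]; first by rewrite idx'_a.
  by rewrite idx'_L // ltnS ltnW // idxL.
rewrite ltnS leq_eqVlt => /orP [/eqP ->|/hidx [x xL <-]].
  by exists a; [left|].
by exists x; [right|rewrite idx'_L].
Qed.

Definition pair_env (T : Type) (a b : T) (i : nat) : T := if i is 0 then a else b.

Section BinaryTerm.
Variables (S : signature) (t : term S nat).
Hypothesis ht : inT 2 t.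

Definition tbin (B : algebra S) (a b : B) : B := eval (pair_env a b) t.

Lemma eval_subst_pair (B : algebra S) (e : nat -> B) r1 r2 :
  eval e (subst (pair_env r1 r2) t) = tbin (eval e r1) (eval e r2).
Proof. by rewrite eval_subst; apply: eval_ext => -[]. Qed.

Lemma occurs_subst_pair (r1 r2 : term S nat) x :
  occurs x (subst (pair_env r1 r2) t) <-> occurs x r1 \/ occurs x r2.
Proof.
rewrite occurs_subst; split=> [[[|[|i]] /ht //]|[hx|hx]]; auto.
- by exists 0 => //; apply/ht.
- by exists 1 => //; apply/ht.
Qed.

Lemma tbin_congr (B : algebra S) (r : B -> B -> Prop) a a' b b' :
  congruence r -> r a a' -> r b b' -> r (tbin a b) (tbin a' b').
Proof. by move=> hr ha hb; apply: eval_congr => // -[]. Qed.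

Variables (hS : plural S) (B : algebra S).
Hypothesis hB : prolonged_variety (Tt t) B.

Lemma prolonged_Tt_law m r1 r2 (e : nat -> B) :
  inT m r1 -> inT m r2 -> tbin (eval e r1) (eval e r2) = eval e r1.
Proof.
move=> h1 h2; rewrite -eval_subst_pair.
apply: (hB (s := (_, subst (pair_env r1 r2) (Var 0)))); exists (t, Var 0); split.
  by move=> C hC; apply: hC.
exists m; split; first by have [x /h1] := term_has_var hS r1; case: m {h1 h2}.
by exists (pair_env r1 r2); split=> // -[|[|i]] [/ht|] //= <-.
Qed.

Lemma tbin_idem (a : B) : tbin a a = a.
Proof.
have hv : inT 1 (@Var S nat 0) by move=> x; split=> [->|/=]; last case: x.
exact: (prolonged_Tt_law (fun _ => a) hv hv).
Qed.

(* Both [t(x, t(y, z))] and [t(z, t(y, x))] lie in T_3, so absorbing the second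
   into the first is an identity of B. *)
Lemma tbin_absorb_trans (theta : B -> B -> Prop) (p q r : B) :
  congruence theta ->
  theta (tbin p q) p -> theta (tbin q r) q -> theta (tbin r q) r -> theta (tbin q p) q ->
  theta (tbin p r) p.
Proof.
move=> hth hpq hqr hrq hqp; have [thr [ths [tht _]]] := hth.
pose e i := if i is 0 then p else if i is 1 then q else r.
pose w1 := subst (pair_env (Var 0) (subst (pair_env (Var 1) (Var 2)) t)) t.
pose w2 := subst (pair_env (Var 2) (subst (pair_env (Var 1) (Var 0)) t)) t.
have w1T : inT 3 w1 by move=> x; rewrite !occurs_subst_pair /=; lia.
have w2T : inT 3 w2 by move=> x; rewrite !occurs_subst_pair /=; lia.
have := prolonged_Tt_law e w1T w2T; rewrite !eval_subst_pair /= => absorb.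
have h1 : theta (tbin p (tbin q r)) p by apply: tht hpq; apply: tbin_congr.
have h2 : theta (tbin r (tbin q p)) r by apply: tht hrq; apply: tbin_congr.
by apply: tht (ths _ _ (tbin_congr hth h1 h2)) _; rewrite absorb.
Qed.

End BinaryTerm.

Section FreeProlonged.
Variables (S : signature) (hS : plural S) (t : term S nat) (ht : inT 2 t).
Variables (X : Type) (A : algebra S) (iota : X -> A).
Hypothesis hfree : is_free (prolonged_variety (Tt t)) iota.

Lemma content_hom : exists h : A -> powerset_alg S X,
  hom h /\ forall u, h (eval iota u) = fun y => occurs y u.
Proof.
have hP : prolonged_variety (Tt t) (powerset_alg S X).
  exact/(in_S_prolonged hS)/in_S_powerset.
have [h [hh hiota]] := proj2 (proj2 hfree) _ hP (fun x y => y = x).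
exists h; split=> // u; rewrite (hom_eval _ _ hh); apply: functional_extensionality => y.
apply: propositional_extensionality; rewrite eval_powerset.
by split=> [[x hx]|hy]; [rewrite hiota => -> | exists y => //; rewrite hiota].
Qed.

(* Renaming the variables of [u] to [0, ..., m-1] puts [u] and [w] in T_m. *)
Lemma tbin_same_vars (u w : term S X) : (forall x, occurs x u <-> occurs x w) ->
  tbin t (eval iota u) (eval iota w) = eval iota u.
Proof.
move=> huw; have [x0 _] := term_has_var hS u.
have [m [idx [sel [hsel hidx]]]] := list_enumeration x0 (term_vars u).
pose ren (v : term S X) := subst (fun x => Var (idx x)) v.
have eval_ren v : (forall x, occurs x v -> occurs x u) ->
    eval (fun i => iota (sel i)) (ren v) = eval iota v.
  by move=> hv; rewrite eval_subst; apply: eval_ext => x /hv /In_term_vars /hsel /= ->.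
have ren_inT v : (forall x, occurs x v <-> occurs x u) -> inT m (ren v).
  move=> hv i; rewrite occurs_subst -hidx; split=> [[y /hv hy /= ->]|[y /In_term_vars hy <-]].
    by exists y => //; apply/In_term_vars.
  by exists y => //; apply/hv.
rewrite -(eval_ren u) // -(eval_ren w) => [|x /huw //].
by apply: (prolonged_Tt_law ht hS (proj1 hfree)); apply: ren_inT => // x; rewrite huw.
Qed.

Lemma replica_tbin (rho : A -> A -> Prop) a b :
  is_sl_replica rho -> rho a b -> tbin t a b = a.
Proof.
move=> [_ [_ rho_min]] hab; have [h [hh hcontent]] := content_hom.
have := rho_min _ (kernel_congruence hh) (in_S_quotient_kernel hh (@in_S_powerset S X)) _ _ hab.
have [u <-] := proj1 (proj2 hfree) a; have [w <-] := proj1 (proj2 hfree) b.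
rewrite /= !hcontent => same_vars; apply: tbin_same_vars => x.
by rewrite (congr1 (fun P : X -> Prop => P x) same_vars).
Qed.

Lemma join_replica_tbin (theta rho : A -> A -> Prop) a b :
  congruence theta -> is_sl_replica rho -> cjoin theta rho a b -> theta (tbin t a b) a.
Proof.
move=> hth hrho /(cjoin_chain hth (proj1 hrho)) hab; have [thr [ths _]] := hth.
suff : theta (tbin t a b) a /\ theta (tbin t b a) b by case.
elim: hab => [{}a {}b hab|{}a {}b hab|p q r _ [hpq hqp] _ [hqr hrq]].
- have idem := tbin_idem ht hS (proj1 hfree).
  split; first by rewrite -{2}(idem a); apply: tbin_congr hth (thr a) (ths _ _ hab).
  by rewrite -{2}(idem b); apply: tbin_congr hth (thr b) hab.
- have [_ [rs _]] := proj1 hrho.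
  by rewrite (replica_tbin hrho hab) (replica_tbin hrho (rs _ _ hab)); split; apply: thr.
- have absorb := tbin_absorb_trans ht hS (proj1 hfree) hth.
  by split; [apply: absorb hpq hqr hrq hqp|apply: absorb hrq hqp hpq hqr].
Qed.

Lemma class_satisfies_Tt (theta rho : A -> A -> Prop) a :
  congruence theta -> is_sl_replica rho ->
  class_satisfies (quot_rel theta (cjoin theta rho)) (cls theta a) (Tt_identity t).
Proof.
move=> hth hrho e he /=; have hpsi := cjoin_congruence theta rho.
have [_ [ps [pt _]]] := hpsi.
have rel_rep := quot_rel_rep hth hpsi (@cjoin_l _ _ theta rho).
rewrite (eval_quotient hth) -(cls_rep (e 0)); apply/(cls_eq hth).
have -> : eval (fun x => rep (e x)) t = tbin t (rep (e 0)) (rep (e 1)).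
  by apply: eval_ext => -[|[|i]] // /ht.
apply: (join_replica_tbin hth hrho).
exact: pt (ps _ _ (proj1 (rel_rep _ _) (he 0))) (proj1 (rel_rep _ _) (he 1)).
Qed.

End FreeProlonged.

Theorem proposition4p8 (S : signature) (hS : plural S)
  (t : term S nat) (ht : inT 2 t)
  (X : Type) (A : algebra S) (iota : X -> A)
  (hfree : is_free (prolonged_variety (Tt t)) iota)
  (rho : A -> A -> Prop) (hrho : is_sl_replica rho)
  (theta : A -> A -> Prop) (htheta : congruence theta) :
  sl_sum (Tt_ids t) (quotient theta) /\
  is_sl_replica (quot_rel theta (cjoin theta rho)) /\
  (forall a : A,
     class_satisfies (quot_rel theta (cjoin theta rho)) (cls theta a)
       (Tt_identity t)).
Proof.
have replica := quot_rel_join_replica htheta hrho.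
have Tt_classes a := class_satisfies_Tt hS ht hfree (a := a) htheta hrho.
split=> //; exists (quot_rel theta (cjoin theta rho)).
have [hq [hqS _]] := replica; do 2!split=> //.
split=> [|s ->]; first exact: class_subalgebra_in_S.
by rewrite -(cls_rep b).
Qed.
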